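(* Let $\mathcal H=\{H_1,\dots,H_n\}$ be oriented affine hyperplanes in $\mathbb R^d$ and $X\subseteq\mathbb R^d$ such that $(\mathcal H,X)$ is a stable arrangement. Then every nonempty atom $A_\sigma$ ($\sigma\subseteq[n]$) of the cover $\{H_i^+\cap X\}_{i\in[n]}$ of $X$ has nonempty interior.
   Context: An oriented affine hyperplane is $H_i=\{x:w_i\cdot x-h_i=0\}$ with $w_i\in\mathbb R^d\setminus\{0\}$, $h_i\in\mathbb R$, and $H_i^+=\{w_i\cdot x-h_i>0\}$, $H_i^-=\{w_i\cdot x-h_i<0\}$. The atom of $\sigma\subseteq[n]$ is $A_\sigma=\bigl(\bigcap_{i\in\sigma}(H_i^+\cap X)\bigr)\setminus\bigcup_{j\notin\sigma}H_j^+$, with $A_\emptyset=X\setminus\bigcup_iH_i^+$. $(\mathcal H,X)$ is stable if $X$ is open and convex and for every $\sigma\subseteq[n]$ with $X\cap\bigcap_{i\in\sigma}H_i\neq\emptyset$, the affine subspace $\bigcap_{i\in\sigma}H_i$ has dimension $d-|\sigma|$. *)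

(* R^d is modelled as 'rV[R]_d, R : realType,
   with the (max-norm, hence Euclidean) topology of matrix_normedtype. *)
From HB Require Import structures.
From mathcomp Require Import all_boot all_order all_algebra.
From mathcomp Require Import all_classical all_reals all_analysis.
Set Implicit Arguments. Unset Strict Implicit. Unset Printing Implicit Defensive.
Import Order.TTheory GRing.Theory Num.Theory.
Import numFieldTopology.Exports numFieldNormedType.Exports.
Local Open Scope classical_set_scope.
Local Open Scope ring_scope.

Definition dotv (R : realType) (d : nat) (u v : 'rV[R]_d) : R :=
  \sum_(k < d) u 0 k * v 0 k.

Definition hyp (R : realType) (d n : nat) (w : 'I_n -> 'rV[R]_d) (h : 'I_n -> R)
  (i : 'I_n) : set 'rV[R]_d := [set x | dotv (w i) x - h i = 0].
Definition hyp_pos (R : realType) (d n : nat) (w : 'I_n -> 'rV[R]_d) (h : 'I_n -> R)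
  (i : 'I_n) : set 'rV[R]_d := [set x | dotv (w i) x - h i > 0].

(* intersection of the hyperplanes H_i, i in sigma (= R^d for sigma empty) *)
Definition hyp_cap (R : realType) (d n : nat) (w : 'I_n -> 'rV[R]_d) (h : 'I_n -> R)
  (sigma : {set 'I_n}) : set 'rV[R]_d :=
  \bigcap_(i in [set i | i \in sigma]) hyp w h i.

(* atom A_sigma = (cap_{i in sigma} (H_i^+ ∩ X)) \ (cup_{j notin sigma} H_j^+);
   note: for sigma = set0 the first intersection is taken inside X, giving X \ cup H_i^+ *)
Definition atom (R : realType) (d n : nat) (w : 'I_n -> 'rV[R]_d) (h : 'I_n -> R)
  (X : set 'rV[R]_d) (sigma : {set 'I_n}) : set 'rV[R]_d :=
  [set x | X x /\ (forall i, i \in sigma -> hyp_pos w h i x)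
               /\ (forall j, j \notin sigma -> ~ hyp_pos w h j x)].

Definition affine_subspace_of_dim (R : realType) (d k : nat) (S : set 'rV[R]_d) :=
  exists (p : 'rV[R]_d) (B : 'M[R]_(k, d)),
    row_free B /\ S = [set p + u *m B | u in [set: 'rV[R]_k]].

Definition convex (R : realType) (d : nat) (X : set 'rV[R]_d) :=
  forall x y (t : R), X x -> X y -> 0 <= t -> t <= 1 -> X ((1 - t) *: x + t *: y).

Definition stable (R : realType) (d n : nat) (w : 'I_n -> 'rV[R]_d) (h : 'I_n -> R)
  (X : set 'rV[R]_d) :=
  open X /\ convex X /\
  forall sigma : {set 'I_n}, X `&` hyp_cap w h sigma !=set0 ->
    (#|sigma| <= d)%N /\ affine_subspace_of_dim (d - #|sigma|)%N (hyp_cap w h sigma).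

From HB Require Import structures.
From mathcomp Require Import all_boot all_order all_algebra.
From mathcomp Require Import all_classical all_reals all_analysis.
From mathcomp Require Import zify.
Set Implicit Arguments. Unset Strict Implicit. Unset Printing Implicit Defensive.
Import Order.TTheory GRing.Theory Num.Theory.
Import numFieldTopology.Exports numFieldNormedType.Exports.
Local Open Scope classical_set_scope.
Local Open Scope ring_scope.

(** Take x in the atom and let tau be the hyperplanes H_j, j notin sigma, through x.
   Stability says that dropping one H_j from tau raises the dimension of the flat
   cut out by tau, so there is a direction tangent to all the other hyperplanes of
   tau that moves strictly into H_j^-.  Summing these directions gives v pointing
   strictly into every H_j^-, j in tau; for small e > 0 the point x + e v then lies
   strictly on the correct side of every hyperplane and inside the open set X, and
   the set of such points is an open subset of the atom. *)

Section DotProduct.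
Variables (R : realType) (d : nat).
Implicit Types (u x y : 'rV[R]_d).

Lemma dotvD u x y : dotv u (x + y) = dotv u x + dotv u y.
Proof. by rewrite /dotv -big_split; apply: eq_bigr => k _; rewrite mxE mulrDr. Qed.

Lemma dotvZ u (a : R) x : dotv u (a *: x) = a * dotv u x.
Proof. by rewrite /dotv big_distrr; apply: eq_bigr => k _; rewrite mxE mulrCA. Qed.

Lemma dotv0 u : dotv u 0 = 0.
Proof. by rewrite /dotv big1 // => k _; rewrite mxE mulr0. Qed.

Lemma dotvB u x y : dotv u (x - y) = dotv u x - dotv u y.
Proof. by rewrite dotvD -scaleN1r dotvZ mulN1r. Qed.

Lemma dotv_sum u (I : finType) (P : pred I) (F : I -> 'rV[R]_d) :
  dotv u (\sum_(i | P i) F i) = \sum_(i | P i) dotv u (F i).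
Proof. exact: (big_morph _ (dotvD u) (dotv0 u)). Qed.

Lemma continuous_dotv u : continuous (dotv u).
Proof.
apply: continuous_big => [|k _ x]; first exact: add_continuous.
apply: (@cvgM R _ (nbhs x) _ (fun=> u 0 k) (fun y : 'rV[R]_d => y 0 k)).
  exact: cvg_cst.
exact: coord_continuous.
Qed.

End DotProduct.

Section AffineDimension.
Variables (R : realType) (d : nat).

Lemma affine_param_submx k1 k2 (p1 p2 : 'rV[R]_d) (B1 : 'M[R]_(k1, d)) (B2 : 'M[R]_(k2, d)) :
  [set p1 + u *m B1 | u in [set: 'rV[R]_k1]] = [set p2 + u *m B2 | u in [set: 'rV[R]_k2]] ->
  (B1 <= B2)%MS.
Proof.
move=> E; have : [set p2 + u *m B2 | u in [set: 'rV[R]_k2]] p1.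
  by rewrite -E; exists 0 => //; rewrite mul0mx addr0.
case=> u0 _ Hu0; apply/row_subP => i.
have : [set p2 + u *m B2 | u in [set: 'rV[R]_k2]] (p1 + delta_mx 0 i *m B1).
  by rewrite -E; exists (delta_mx 0 i).
case=> u _ Hu; suff -> : row i B1 = (u - u0) *m B2 by exact: submxMl.
rewrite rowE mulmxBl; apply: (addrI p1).
by rewrite -Hu -Hu0 [u *m B2 - _]addrC addrA addrK.
Qed.

Lemma affine_subspace_of_dim_uniq k1 k2 (S : set 'rV[R]_d) :
  affine_subspace_of_dim k1 S -> affine_subspace_of_dim k2 S -> k1 = k2.
Proof.
move=> [p1 [B1 [/eqP free1 E1]]] [p2 [B2 [/eqP free2 E2]]].
rewrite E1 in E2.
apply/eqP; rewrite -free1 -free2 eqn_leq.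
by rewrite (mxrankS (affine_param_submx E2)) (mxrankS (affine_param_submx (esym E2))).
Qed.

End AffineDimension.

Section Perturbation.
Variable R : realFieldType.

Lemma cvg_right0_affine (a b : R) : (fun e => a + e * b) @ 0^'+ --> a.
Proof.
apply: cvg_at_right_filter.
have : (fun e => a + e * b) @ 0 --> a + 0 * b.
  by apply: cvgD; [exact: cvg_cst | apply: cvgM; [exact: cvg_id | exact: cvg_cst]].
by rewrite mul0r addr0.
Qed.

Lemma near_right0_affine_gt (a b : R) : 0 < a -> \forall e \near 0^'+, 0 < a + e * b.
Proof. exact: (cvgr_gt _ (@cvg_right0_affine a b)). Qed.

Lemma near_right0_affine_lt (a b : R) :
  a <= 0 -> (a = 0 -> b < 0) -> \forall e \near 0^'+, a + e * b < 0.
Proof.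
rewrite le_eqVlt => /orP[/eqP a0 /(_ a0) b_lt0 | a_lt0 _].
  by near=> e; rewrite a0 add0r pmulr_rlt0.
exact: (cvgr_lt _ (@cvg_right0_affine a b)).
Unshelve. all: by end_near.
Qed.

End Perturbation.

Section Arrangement.
Variables (R : realType) (d n : nat) (w : 'I_n -> 'rV[R]_d) (h : 'I_n -> R).
Variable X : set 'rV[R]_d.

Lemma hyp_capS (S T : {set 'I_n}) : S \subset T -> hyp_cap w h T `<=` hyp_cap w h S.
Proof. by move=> /fintype.subsetP ST y Ty i /= /ST iT; exact: Ty. Qed.

Lemma hyp_cap_setD1_not_sub (x : 'rV[R]_d) (tau : {set 'I_n}) j :
  stable w h X -> X x -> hyp_cap w h tau x -> j \in tau ->
  ~ (hyp_cap w h (tau :\ j) `<=` hyp_cap w h tau).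
Proof.
move=> [_ [_ st]] Xx taux jtau sub.
have [tau_le [p [B [free E]]]] := st tau (ex_intro _ x (conj Xx taux)).
have [_ dimD] := st (tau :\ j)
  (ex_intro _ x (conj Xx (hyp_capS (subsetDl tau [set j]) taux))).
have eqcap : hyp_cap w h (tau :\ j) = hyp_cap w h tau.
  by apply/seteqP; split => //; exact/hyp_capS/subsetDl.
have := affine_subspace_of_dim_uniq (ex_intro _ p (ex_intro _ B (conj free E))).
rewrite -eqcap => /(_ _ dimD).
have := cardsD1 j tau; rewrite jtau add1n.
move: tau_le; set a := #|tau|; set b := #|tau :\ j|; lia.
Qed.

Lemma stable_facet_direction (x : 'rV[R]_d) (tau : {set 'I_n}) j :
  stable w h X -> X x -> hyp_cap w h tau x -> j \in tau ->
  exists v, dotv (w j) v < 0 /\ forall k, k \in tau -> k != j -> dotv (w k) v = 0.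
Proof.
move=> stX Xx taux jtau.
have [y [ycapD ycap]] : exists y, hyp_cap w h (tau :\ j) y /\ ~ hyp_cap w h tau y.
  apply: contrapT => none; apply: (hyp_cap_setD1_not_sub stX Xx taux jtau) => y yD.
  by apply: contrapT => ny; apply: none; exists y.
have hx k : k \in tau -> dotv (w k) x = h k.
  by move=> ktau; apply/eqP; rewrite -subr_eq0; apply/eqP/(taux k).
have hy k : k \in tau -> k != j -> dotv (w k) y = h k.
  by move=> ktau kj; apply/eqP; rewrite -subr_eq0; apply/eqP/ycapD; rewrite /= !inE kj.
have cj : dotv (w j) y - h j != 0.
  apply: contra_notN ycap => /eqP yj k /= ktau.
  by have [->|kj] := eqVneq k j; [exact: yj | rewrite /hyp /= hy ?subrr].
(* y - x is tangent to the H_k, k in tau :\ j; the scalar makes w j decrease along it. *)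
exists ((h j - dotv (w j) y) *: (y - x)); split => [|k ktau kj].
  by rewrite dotvZ dotvB hx // -opprB mulNr oppr_lt0 -expr2 exprn_even_gt0.
by rewrite dotvZ dotvB (hx k) // (hy k) // subrr mulr0.
Qed.

Lemma stable_inward_direction (x : 'rV[R]_d) (tau : {set 'I_n}) :
  stable w h X -> X x -> hyp_cap w h tau x ->
  exists v, forall k, k \in tau -> dotv (w k) v < 0.
Proof.
move=> stX Xx taux.
have /fin_all_exists [V HV] : forall j, exists v : 'rV[R]_d, j \in tau ->
    dotv (w j) v < 0 /\ forall k, k \in tau -> k != j -> dotv (w k) v = 0.
  move=> j; have [jtau|_] := boolP (j \in tau); last by exists 0.
  by have [v Hv] := stable_facet_direction stX Xx taux jtau; exists v.
exists (\sum_(j in tau) V j) => k ktau.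
rewrite dotv_sum (bigD1 k) //= big1 ?addr0; first by have [] := HV k ktau.
by move=> j /andP[jtau jk]; apply: (HV j jtau).2; rewrite // eq_sym.
Qed.

Definition strict_side (sigma : {set 'I_n}) i (x : 'rV[R]_d) :=
  if i \in sigma then 0 < dotv (w i) x - h i else dotv (w i) x - h i < 0.

Definition strict_atom (sigma : {set 'I_n}) :=
  [set x | X x /\ forall i, strict_side sigma i x].

Lemma strict_atom_sub_atom sigma : strict_atom sigma `<=` atom w h X sigma.
Proof.
move=> x [Xx side]; split => //; split => i; have := side i; rewrite /strict_side.
  by move=> + isig; rewrite isig.
by move=> + /negbTE isig; rewrite isig /hyp_pos /= => /lt_gtF ->.
Qed.

Lemma open_strict_atom sigma : open X -> open (strict_atom sigma).
Proof.
move=> oX; rewrite openE => x [Xx side]; rewrite /interior /=.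
have nside i : nbhs x (strict_side sigma i).
  move: (side i); rewrite /strict_side; case: (i \in sigma); rewrite ?subr_gt0 ?subr_lt0.
    by move/(cvgr_gt _ (@continuous_dotv _ _ (w i) x)); apply: filterS => y; rewrite subr_gt0.
  by move/(cvgr_lt _ (@continuous_dotv _ _ (w i) x)); apply: filterS => y; rewrite subr_lt0.
apply: filterS2 (open_nbhs_nbhs (conj oX Xx)) (filter_forall _ nside).
by move=> y Xy sidey; split.
Qed.

Lemma atom_near_strict_atom sigma (x v : 'rV[R]_d) :
  open X -> atom w h X sigma x ->
  (forall k, k \notin sigma -> dotv (w k) x - h k = 0 -> dotv (w k) v < 0) ->
  \forall e \near 0^'+, strict_atom sigma (x + e *: v).
Proof.
move=> oX [Xx [pos neg]] inward.
have ray i e : dotv (w i) (x + e *: v) - h i = dotv (w i) x - h i + e * dotv (w i) v.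
  by rewrite dotvD dotvZ addrAC.
apply/near_andP; split.
  have : (fun e : R => x + e *: v) @ 0^'+ --> x.
    apply: cvg_at_right_filter.
    have : (fun e : R => x + e *: v) @ 0 --> x + 0 *: v.
      by apply: cvgD; [exact: cvg_cst | apply: cvgZ; [exact: cvg_id | exact: cvg_cst]].
    by rewrite scale0r addr0.
  by apply; exact: open_nbhs_nbhs.
apply: filter_forall => i; rewrite /strict_side.
have [isig|isig] := boolP (i \in sigma).
  by under eq_near do rewrite ray; exact: near_right0_affine_gt (pos i isig).
under eq_near do rewrite ray; apply: near_right0_affine_lt (inward i isig).
by rewrite leNgt; apply/negP; exact: neg.
Qed.

End Arrangement.

Theorem lemma2p4 (R : realType) (d n : nat) (w : 'I_n -> 'rV[R]_d) (h : 'I_n -> R)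
  (X : set 'rV[R]_d) :
  (forall i, w i != 0) ->
  stable w h X ->
  forall sigma : {set 'I_n},
    atom w h X sigma !=set0 -> interior (atom w h X sigma) !=set0.
Proof.
move=> _ stX sigma [x ax]; have oX := stX.1.
pose tau := [set j | (j \notin sigma) && (dotv (w j) x - h j == 0)]%SET.
have [v inward] : exists v, forall k, k \in tau -> dotv (w k) v < 0.
  by apply: stable_inward_direction stX ax.1 _ => k; rewrite /= inE => /andP[_ /eqP].
have inward_tight k : k \notin sigma -> dotv (w k) x - h k = 0 -> dotv (w k) v < 0.
  by move=> ksig k0; apply: inward; rewrite inE ksig k0 eqxx.
have [e strict_e] := filter_ex (atom_near_strict_atom oX ax inward_tight).
have strict_sub_int : strict_atom w h X sigma `<=` interior (atom w h X sigma).
  by rewrite -(open_subsetE _ (open_strict_atom (sigma := sigma) oX)); exact: strict_atom_sub_atom.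
by exists (x + e *: v); apply: strict_sub_int.
Qed.
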